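(* For every $N\times N$ stochastic matrix $A$ and every $t\geq 1$, one has $\frac{1}{N}\leq \tau_t(A)\leq 1$. Moreover, if $A$ is reducible, then $\tau_t(A)\leq 1-\frac{1}{N+1}$ for all $t\geq 1$.
   Context: Let $X$ be a square-integrable real random variable with $\mathbb E X=\theta$ and $\mathrm{Var}(X)=\sigma^2>0$. Fix an integer $N\geq 2$. For $i\in\{1,\dots,N\}$ and $t\geq 1$ let $X_t^{(i)}$ be random variables distributed as $X$, mutually independent over both $i$ and $t$, and write $\mathbf X_t=(X_t^{(1)},\dots,X_t^{(N)})^\top$. Let $A=(a_{ij})_{1\le i,j\le N}$ be a stochastic matrix ($a_{ij}\geq 0$ and every row sums to $1$). Define $\hat{\boldsymbol\theta}_1=\mathbf X_1$ and $\hat{\boldsymbol\theta}_{t+1}=\frac{t}{t+1}A\hat{\boldsymbol\theta}_t+\frac{1}{t+1}\mathbf X_{t+1}$ for $t\geq 1$. Let $\bar{\mathbb X}_{Nt}=\frac{1}{Nt}\sum_{i=1}^N\sum_{k=1}^t X_k^{(i)}$, $\mathbf 1=(1,\dots,1)^\top$, and let $\|\cdot\|$ denote the Euclidean norm. The performance ratio is $\tau_t(A)=\dfrac{\mathbb E\|(\bar{\mathbb X}_{Nt}-\theta)\mathbf 1\|^2}{\mathbb E\|\hat{\boldsymbol\theta}_t-\theta\mathbf 1\|^2}$, $t\geq 1$. A stochastic matrix $A$ is irreducible if for every pair $(i,j)$ there is an integer $k\geq 0$ with $(A^k)_{ij}\neq 0$, and reducible otherwise. *)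

From HB Require Import structures.
From mathcomp Require Import all_boot all_order all_algebra.
Set Implicit Arguments. Unset Strict Implicit. Unset Printing Implicit Defensive.
Import Order.TTheory GRing.Theory Num.Theory.
Local Open Scope ring_scope.

Definition stochastic (R : numDomainType) (N : nat) (A : 'M[R]_N) : Prop :=
  (forall i j, 0 <= A i j) /\ (forall i, \sum_j A i j = 1).

Definition irreducible (R : numDomainType) (N : nat) (A : 'M[R]_N) : Prop :=
  forall i j, exists k : nat, (A ^+ k) i j != 0.

(* Abstract second-order probability model on a sample space Om:
   L1 = integrable random variables, L2 = square-integrable ones,
   E = expectation (linear, normalized, positive on L1). *)
Record expectation_space (R : realFieldType) (Om : Type)
    (L1 L2 : (Om -> R) -> Prop) (E : (Om -> R) -> R) : Prop := {
  L2_const : forall c : R, L2 (fun _ => c);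
  L2_add : forall f g, L2 f -> L2 g -> L2 (fun w => f w + g w);
  L2_scale : forall (c : R) f, L2 f -> L2 (fun w => c * f w);
  L2_mul : forall f g, L2 f -> L2 g -> L1 (fun w => f w * g w);
  L1_add : forall f g, L1 f -> L1 g -> L1 (fun w => f w + g w);
  L1_scale : forall (c : R) f, L1 f -> L1 (fun w => c * f w);
  E_add : forall f g, L1 f -> L1 g -> E (fun w => f w + g w) = E f + E g;
  E_scale : forall (c : R) f, L1 f -> E (fun w => c * f w) = c * E f;
  E_const : forall c : R, E (fun _ => c) = c;
  E_pos : forall f, L1 f -> (forall w, 0 <= f w) -> 0 <= E f
}.

(* The samples X i t (i : 'I_N agent, t >= 1 time) are square integrable,
   with mean theta and variance sigma2, and pairwise independent (used only
   through E[X Y] = E[X] E[Y] for distinct pairs of samples). *)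
Definition sample_model (R : realFieldType) (Om : Type) (N : nat)
    (L1 L2 : (Om -> R) -> Prop) (E : (Om -> R) -> R)
    (X : 'I_N -> nat -> Om -> R) (theta sigma2 : R) : Prop :=
  [/\ forall i t, (0 < t)%N -> L2 (X i t),
      forall i t, (0 < t)%N -> E (X i t) = theta,
      forall i t, (0 < t)%N -> E (fun w => (X i t w - theta) ^+ 2) = sigma2
    & forall i t j s, (0 < t)%N -> (0 < s)%N -> (i, t) != (j, s) ->
        E (fun w => X i t w * X j s w) = E (X i t) * E (X j s)].

(* theta_hat t i w : component i of the estimator at time t (t >= 1).
   theta_hat 0 is an unused junk value 0; the recursion at t = 0 gives
   theta_hat 1 = X_1 exactly. *)
Fixpoint theta_hat (R : realFieldType) (Om : Type) (N : nat) (A : 'M[R]_N)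
    (X : 'I_N -> nat -> Om -> R) (t : nat) : 'I_N -> Om -> R :=
  match t with
  | 0 => fun _ _ => 0
  | t'.+1 => fun i w =>
      t'%:R / t'.+1%:R * (\sum_j A i j * theta_hat A X t' j w)
      + t'.+1%:R^-1 * X i t'.+1 w
  end.

Definition Xbar (R : realFieldType) (Om : Type) (N : nat)
    (X : 'I_N -> nat -> Om -> R) (t : nat) (w : Om) : R :=
  (N * t)%:R^-1 * \sum_(i < N) \sum_(1 <= k < t.+1) X i k w.

Definition tau (R : realFieldType) (Om : Type) (N : nat)
    (E : (Om -> R) -> R) (A : 'M[R]_N) (X : 'I_N -> nat -> Om -> R)
    (theta : R) (t : nat) : R :=
  E (fun w => \sum_(i < N) (Xbar X t w - theta) ^+ 2)
  / E (fun w => \sum_(i < N) (theta_hat A X t i w - theta) ^+ 2).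

From HB Require Import structures.
From mathcomp Require Import all_boot all_order all_algebra.
From mathcomp Require Import zify ring boolp.
Set Implicit Arguments. Unset Strict Implicit. Unset Printing Implicit Defensive.
Import Order.TTheory GRing.Theory Num.Theory.
Local Open Scope ring_scope.

(** With e_k := X_k - theta 1, unrolling the recursion gives
    t (theta_hat_t - theta 1) = sum_(k < t) A^(t-1-k) e_(k+1).  The coordinates of
    the e_k are orthogonal with variance sigma^2, so
    E||theta_hat_t - theta 1||^2 = sigma^2 t^-2 sum_(m < t) ||A^m||_F^2, while
    E||(Xbar - theta) 1||^2 = sigma^2 / t; hence tau_t(A) = t / sum_(m < t) ||A^m||_F^2.
    The rows of a stochastic matrix are probability vectors, whose squared norms lie
    in [1/N, 1], so 1 <= ||A^m||_F^2 <= N.  If A is reducible, some state i0 cannot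
    reach some state j0; the set S of states reachable from i0 is closed under every
    A^m, so the rows of A^m indexed by S are probability vectors supported in S and
    contribute at least |S| * (1/|S|) = 1, and row j0 adds at least 1/N more. *)

Lemma sum_ord_ge_const (R : numDomainType) t (F : 'I_t -> R) (a : R) :
  (forall k, a <= F k) -> t%:R * a <= \sum_k F k.
Proof. by move=> aF; rewrite -[t in t%:R]card_ord mulr_natl -sumr_const; exact: ler_sum. Qed.

Lemma sum_ord_le_const (R : numDomainType) t (F : 'I_t -> R) (b : R) :
  (forall k, F k <= b) -> \sum_k F k <= t%:R * b.
Proof. by move=> Fb; rewrite -[t in t%:R]card_ord mulr_natl -sumr_const; exact: ler_sum. Qed.

Section ExpectationSpace.
Variables (R : realFieldType) (Om : Type).
Variables (L1 L2 : (Om -> R) -> Prop) (E : (Om -> R) -> R).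
Hypothesis HE : expectation_space L1 L2 E.

Lemma E_eqfun (f g : Om -> R) : f =1 g -> E f = E g.
Proof. by move=> /funext ->. Qed.

Lemma L1_eqfun (f g : Om -> R) : f =1 g -> L1 f -> L1 g.
Proof. by move=> /funext ->. Qed.

Lemma L2_eqfun (f g : Om -> R) : f =1 g -> L2 f -> L2 g.
Proof. by move=> /funext ->. Qed.

Lemma L1_of_L2 {f : Om -> R} : L2 f -> L1 f.
Proof.
move=> Lf; apply: (@L1_eqfun (fun w => f w * 1)) => [w|]; first exact: mulr1.
exact (L2_mul HE Lf (L2_const HE 1)).
Qed.

Lemma L1_sqr (f : Om -> R) : L2 f -> L1 (fun w => f w ^+ 2).
Proof. by move=> Lf; apply: L1_eqfun (L2_mul HE Lf Lf) => w; rewrite expr2. Qed.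

Lemma L2_sub_const (f : Om -> R) (c : R) : L2 f -> L2 (fun w => f w - c).
Proof. by move=> Lf; exact (L2_add HE Lf (L2_const HE (- c))). Qed.

Section Sums.
Variables (I : Type) (P : pred I) (f : I -> Om -> R).

Lemma L1_sum (r : seq I) :
  (forall i, P i -> L1 (f i)) -> L1 (fun w => \sum_(i <- r | P i) f i w).
Proof.
move=> Lf; elim: r => [|a s IH].
  apply: (@L1_eqfun (fun _ => 0)) => [w|]; first by rewrite big_nil.
  exact: L1_of_L2 (L2_const HE 0).
have [Pa|nPa] := boolP (P a).
  apply: (@L1_eqfun (fun w => f a w + \sum_(i <- s | P i) f i w)) => [w|].
    by rewrite big_cons Pa.
  exact (L1_add HE (Lf a Pa) IH).
by apply: L1_eqfun IH => w; rewrite big_cons (negPf nPa).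
Qed.

Lemma L2_sum (r : seq I) :
  (forall i, P i -> L2 (f i)) -> L2 (fun w => \sum_(i <- r | P i) f i w).
Proof.
move=> Lf; elim: r => [|a s IH].
  by apply: (@L2_eqfun (fun _ => 0)) => [w|]; [rewrite big_nil | exact: (L2_const HE 0)].
have [Pa|nPa] := boolP (P a).
  apply: (@L2_eqfun (fun w => f a w + \sum_(i <- s | P i) f i w)) => [w|].
    by rewrite big_cons Pa.
  exact (L2_add HE (Lf a Pa) IH).
by apply: L2_eqfun IH => w; rewrite big_cons (negPf nPa).
Qed.

Lemma E_sum (r : seq I) : (forall i, P i -> L1 (f i)) ->
  E (fun w => \sum_(i <- r | P i) f i w) = \sum_(i <- r | P i) E (f i).
Proof.
move=> Lf; elim: r => [|a s IH].
  rewrite big_nil -[RHS](E_const HE).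
  by apply: E_eqfun => w; rewrite big_nil.
rewrite big_cons; have [Pa|nPa] := boolP (P a).
  rewrite -IH -(E_add HE (Lf a Pa) (L1_sum s Lf)).
  by apply: E_eqfun => w; rewrite big_cons Pa.
by rewrite -IH; apply: E_eqfun => w; rewrite big_cons (negPf nPa).
Qed.

End Sums.

Lemma E_sqr_orthogonal_sum (I : finType) (e : I -> Om -> R) (s2 : R) (c : I -> R) :
  (forall a, L2 (e a)) ->
  (forall a b, E (fun w => e a w * e b w) = (a == b)%:R * s2) ->
  E (fun w => (\sum_a c a * e a w) ^+ 2) = s2 * \sum_a c a ^+ 2.
Proof.
move=> Le Eab.
have Lab a b : L1 (fun w => c a * c b * (e a w * e b w)).
  exact (L1_scale HE _ (L2_mul HE (Le a) (Le b))).
rewrite (E_eqfun (g := fun w => \sum_a \sum_b c a * c b * (e a w * e b w))); last first.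
  move=> w; rewrite expr2 mulr_suml; apply: eq_bigr => a _; rewrite mulr_sumr.
  by apply: eq_bigr => b _; ring.
rewrite E_sum => [|a _]; last exact: L1_sum.
rewrite mulr_sumr; apply: eq_bigr => a _.
rewrite E_sum // (bigD1 a) //= big1 => [|b nab].
  by rewrite addr0 (E_scale HE _ (L2_mul HE (Le a) (Le a))) Eab eqxx mul1r; ring.
by rewrite (E_scale HE _ (L2_mul HE (Le a) (Le b))) Eab eq_sym (negPf nab) mul0r mulr0.
Qed.

Lemma E_mul_centered (f g : Om -> R) (a b : R) : L2 f -> L2 g ->
  E (fun w => (f w - a) * (g w - b))
  = E (fun w => f w * g w) - a * E g - b * E f + a * b.
Proof.
move=> Lf Lg.
have Lfg := L2_mul HE Lf Lg.
have Laf := L1_scale HE (- b) (L1_of_L2 Lf).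
have Lag := L1_scale HE (- a) (L1_of_L2 Lg).
have Lab := L1_of_L2 (L2_const HE (a * b)).
rewrite (E_eqfun (g := fun w => f w * g w + (- a * g w + (- b * f w + a * b)))); last first.
  by move=> w; ring.
rewrite (E_add HE Lfg (L1_add HE Lag (L1_add HE Laf Lab))).
rewrite (E_add HE Lag (L1_add HE Laf Lab)) (E_add HE Laf Lab).
by rewrite (E_scale HE _ (L1_of_L2 Lg)) (E_scale HE _ (L1_of_L2 Lf)) (E_const HE); ring.
Qed.

End ExpectationSpace.

Section StochasticMatrices.
Variable R : realFieldType.

Lemma sum_sqr_ge_inv_card (I : finType) (S : {set I}) (v : I -> R) :
  \sum_(j in S) v j = 1 -> #|S|%:R^-1 <= \sum_(j in S) v j ^+ 2.
Proof.
move=> Sv; set s : R := #|S|%:R.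
have [s0|s_neq0] := eqVneq s 0.
  by rewrite s0 invr0; apply: sumr_ge0 => j _; exact: sqr_ge0.
have : 0 <= \sum_(j in S) (v j - s^-1) ^+ 2 by apply: sumr_ge0 => j _; exact: sqr_ge0.
suff -> : \sum_(j in S) (v j - s^-1) ^+ 2 = \sum_(j in S) v j ^+ 2 - s^-1.
  by rewrite subr_ge0.
have -> : \sum_(j in S) (v j - s^-1) ^+ 2
    = \sum_(j in S) v j ^+ 2 - (s^-1 *+ 2) * \sum_(j in S) v j + s^-1 ^+ 2 *+ #|S|.
  rewrite -sumr_const mulr_sumr -sumrB -big_split /=.
  by apply: eq_bigr => j _; ring.
by rewrite Sv -mulr_natr -/s expr2 -mulrA mulVf //; ring.
Qed.

Lemma sum_sqr_le1 (I : finType) (v : I -> R) :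
  (forall j, 0 <= v j) -> \sum_j v j = 1 -> \sum_j v j ^+ 2 <= 1.
Proof.
move=> v_ge0 v1; rewrite -[leRHS]v1; apply: ler_sum => j _.
have vj_le1 : v j <= 1 by rewrite -v1 (bigD1 j) //= lerDl sumr_ge0.
by rewrite expr2 ler_piMr.
Qed.

Lemma pow_mx_ge0 N (A : 'M[R]_N) :
  (forall i j, 0 <= A i j) -> forall k i j, 0 <= (A ^+ k) i j.
Proof.
move=> A_ge0; elim=> [|k IH] i j; first by rewrite expr0 mxE ler0n.
by rewrite exprSr -mulmxE mxE sumr_ge0 // => l _; rewrite mulr_ge0.
Qed.

Lemma stochastic_pow N (A : 'M[R]_N) k : stochastic A -> stochastic (A ^+ k).
Proof.
move=> [A_ge0 A1]; split=> [|i]; first exact: pow_mx_ge0.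
elim: k => [|k IH].
  rewrite expr0 (bigD1 i) //= big1 => [|j ji]; first by rewrite mxE eqxx addr0.
  by rewrite mxE eq_sym (negPf ji).
rewrite exprSr -mulmxE; under eq_bigr do rewrite mxE.
by rewrite exchange_big /= -IH; apply: eq_bigr => l _; rewrite -mulr_sumr A1 mulr1.
Qed.

Definition sqr_frobenius N (M : 'M[R]_N) : R := \sum_i \sum_j M i j ^+ 2.

Lemma stochastic_row_sqr_ge N (M : 'M[R]_N) i :
  stochastic M -> N%:R^-1 <= \sum_j M i j ^+ 2.
Proof.
move=> [_ M1]; have := @sum_sqr_ge_inv_card _ [set: 'I_N] (M i).
by rewrite cardsT card_ord !(eq_bigl _ _ (@in_setT _)) M1; apply.
Qed.

Lemma sqr_frobenius_stochastic_ge1 N (M : 'M[R]_N) :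
  (0 < N)%N -> stochastic M -> 1 <= sqr_frobenius M.
Proof.
move=> N_gt0 HM; have -> : 1 = \sum_(i < N) N%:R^-1 :> R.
  by rewrite sumr_const card_ord -[_ *+ N]mulr_natl mulfV // pnatr_eq0 -lt0n.
by apply: ler_sum => i _; exact: stochastic_row_sqr_ge.
Qed.

Lemma sqr_frobenius_stochastic_le N (M : 'M[R]_N) :
  stochastic M -> sqr_frobenius M <= N%:R.
Proof.
move=> [M_ge0 M1]; rewrite -[in leRHS](card_ord N) -sumr_const.
by apply: ler_sum => i _; exact: sum_sqr_le1.
Qed.

Lemma sum_sqr_frobenius_pow_ge N (A : 'M[R]_N) t :
  (0 < N)%N -> stochastic A -> t%:R <= \sum_(m < t) sqr_frobenius (A ^+ m).
Proof.
move=> N_gt0 HA; rewrite -[leLHS]mulr1; apply: sum_ord_ge_const => m.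
exact: sqr_frobenius_stochastic_ge1 N_gt0 (stochastic_pow m HA).
Qed.

Definition closed_set N (M : 'M[R]_N) (S : {set 'I_N}) : Prop :=
  forall i j, i \in S -> j \notin S -> M i j = 0.

Lemma closed_set_pow N (A : 'M[R]_N) S k : closed_set A S -> closed_set (A ^+ k) S.
Proof.
move=> AS; elim: k => [|k IH] i j iS jS.
  by rewrite expr0 mxE (_ : i == j = false) //; apply: contraNF jS => /eqP <-.
rewrite exprSr -mulmxE mxE big1 // => l _.
by have [lS|lS] := boolP (l \in S); [rewrite (AS l j) ?mulr0 | rewrite IH ?mul0r].
Qed.

Lemma not_irreducible_closed_set N (A : 'M[R]_N) :
  (forall i j, 0 <= A i j) -> ~ irreducible A ->
  exists (S : {set 'I_N}) (i j : 'I_N), [/\ i \in S, j \notin S & closed_set A S].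
Proof.
move=> A_ge0 /existsNP[i0 /existsNP[j0 /forallNP unreachable]].
have pow_i0j0 k : (A ^+ k) i0 j0 = 0 by apply/eqP/negPn/negP/unreachable.
pose S := [set l | `[< exists k, (A ^+ k) i0 l != 0 >]].
have inS l : reflect (exists k, (A ^+ k) i0 l != 0) (l \in S).
  by rewrite inE; exact: asboolP.
exists S, i0, j0; split.
- by apply/inS; exists 0%N; rewrite expr0 mxE eqxx oner_eq0.
- by apply/inS => -[k]; rewrite pow_i0j0 eqxx.
move=> l l' /inS[k i0l] l'S.
have i0l'_eq0 : (A ^+ k.+1) i0 l' = 0.
  by apply/eqP; apply: contraNT l'S => ?; apply/inS; exists k.+1.
have terms_ge0 r : 0 <= (A ^+ k) i0 r * A r l' by rewrite mulr_ge0 // pow_mx_ge0.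
move: i0l'_eq0; rewrite exprSr -mulmxE mxE.
move=> /(psumr_eq0P (fun r _ => terms_ge0 r))/(_ l isT)/eqP.
by rewrite mulf_eq0 (negPf i0l) => /eqP.
Qed.

Lemma sqr_frobenius_closed_ge N (M : 'M[R]_N) S i0 j0 :
  stochastic M -> closed_set M S -> i0 \in S -> j0 \notin S ->
  1 + N%:R^-1 <= sqr_frobenius M.
Proof.
move=> HM MS i0S j0S; have [M_ge0 M1] := HM.
have row_in_S i : i \in S -> \sum_(j in S) M i j = 1.
  move=> iS; rewrite -(M1 i) [RHS](bigID (mem S)) /= [X in _ = _ + X]big1 ?addr0 //.
  by move=> j /MS->.
have S_neq0 : (#|S|%:R : R) != 0 by rewrite pnatr_eq0 -lt0n; apply/card_gt0P; exists i0.
rewrite /sqr_frobenius (bigID (mem S)) /=; apply: lerD.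
  have -> : 1 = \sum_(i in S) #|S|%:R^-1 :> R.
    by rewrite sumr_const -[_ *+ _]mulr_natl mulfV.
  apply: ler_sum => i iS.
  apply: le_trans (sum_sqr_ge_inv_card (row_in_S i iS)) _.
  by rewrite [leRHS](bigID (mem S)) /= lerDl sumr_ge0 // => j _; exact: sqr_ge0.
rewrite (bigD1 j0) //=; apply: le_trans (stochastic_row_sqr_ge j0 HM) _.
by rewrite lerDl sumr_ge0 // => i _; apply: sumr_ge0 => j _; exact: sqr_ge0.
Qed.

Lemma sqr_frobenius_reducible_ge N (A : 'M[R]_N) k :
  stochastic A -> ~ irreducible A -> 1 + N%:R^-1 <= sqr_frobenius (A ^+ k).
Proof.
move=> HA /(not_irreducible_closed_set HA.1)[S [i0 [j0 [i0S j0S AS]]]].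
exact: sqr_frobenius_closed_ge (stochastic_pow k HA) (closed_set_pow k AS) i0S j0S.
Qed.

End StochasticMatrices.

Section EstimatorRecursion.
Variables (R : realFieldType) (Om : Type) (N : nat).
Variables (A : 'M[R]_N) (X : 'I_N -> nat -> Om -> R) (theta : R).
Hypothesis A1 : forall i, \sum_j A i j = 1.

Definition centered_sample (k : nat) (w : Om) : 'cV[R]_N :=
  \col_j (X j k.+1 w - theta).

Lemma theta_hat_centered_step t i w :
  t.+1%:R * (theta_hat A X t.+1 i w - theta)
  = \sum_j A i j * (t%:R * (theta_hat A X t j w - theta)) + centered_sample t w i 0.
Proof.
have -> : \sum_j A i j * (t%:R * (theta_hat A X t j w - theta))
    = t%:R * \sum_j A i j * theta_hat A X t j w - t%:R * theta.
  rewrite (eq_bigr (fun j => t%:R * (A i j * theta_hat A X t j w) - t%:R * theta * A i j)).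
    by rewrite sumrB -!mulr_sumr A1 mulr1.
  by move=> j _; ring.
by rewrite /= mxE; field; rewrite addrC natr1 pnatr_eq0.
Qed.

Lemma theta_hat_centered t i w :
  t%:R * (theta_hat A X t i w - theta)
  = \sum_(k < t) (A ^+ (t.-1 - k) *m centered_sample k w) i 0.
Proof.
elim: t i => [|t IH] i; first by rewrite mul0r big_ord0.
rewrite theta_hat_centered_step big_ord_recr /= subnn expr0 mul1mx; congr (_ + _).
under eq_bigr do rewrite IH mulr_sumr.
rewrite exchange_big /=; apply: eq_bigr => k _.
have -> : (t - k = (t.-1 - k).+1)%N by have := ltn_ord k; lia.
by rewrite exprS -mulmxE -mulmxA [in RHS]mxE.
Qed.

End EstimatorRecursion.

Section SampleModel.
Variables (R : realFieldType) (Om : Type) (N : nat).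
Variables (L1 L2 : (Om -> R) -> Prop) (E : (Om -> R) -> R).
Variables (X : 'I_N -> nat -> Om -> R) (theta sigma2 : R).
Hypothesis HE : expectation_space L1 L2 E.
Hypothesis HX : sample_model L1 L2 E X theta sigma2.

(* [p = (k, i)] indexes the sample [X i k.+1]: times are shifted to range over ['I_t]. *)
Definition noise t (p : 'I_t * 'I_N) (w : Om) : R := X p.2 p.1.+1 w - theta.

Lemma L2_noise t (p : 'I_t * 'I_N) : L2 (noise p).
Proof. by case: HX => LX _ _ _; exact: (L2_sub_const HE theta (LX p.2 p.1.+1 isT)). Qed.

Lemma E_noise_mul t (p q : 'I_t * 'I_N) :
  E (fun w => noise p w * noise q w) = (p == q)%:R * sigma2.
Proof.
case: HX => LX EX VX indep; have [<-|pq] := eqVneq p q.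
  by rewrite mul1r -(VX p.2 p.1.+1) //; apply: E_eqfun => w; rewrite expr2.
rewrite mul0r /noise (E_mul_centered HE _ _ (LX p.2 p.1.+1 isT) (LX q.2 q.1.+1 isT)).
rewrite indep ?EX //; first by ring.
by case: p q pq => [k i] [l j] pq; apply: contraNneq pq => -[-> /val_inj ->].
Qed.

Lemma E_sqr_noise_comb t (c : 'I_t * 'I_N -> R) :
  E (fun w => (\sum_p c p * noise p w) ^+ 2) = sigma2 * \sum_p c p ^+ 2.
Proof. exact: (E_sqr_orthogonal_sum HE c (@L2_noise t) (@E_noise_mul t)). Qed.

Lemma L1_sqr_noise_comb t (c : 'I_t * 'I_N -> R) :
  L1 (fun w => (\sum_p c p * noise p w) ^+ 2).
Proof.
apply: (L1_sqr HE); apply: (L2_sum HE) => p _.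
exact: (L2_scale HE (c p) (L2_noise p)).
Qed.

Lemma Xbar_centered t w : (0 < N)%N -> (0 < t)%N ->
  Xbar X t w - theta = (N * t)%:R^-1 * \sum_(p : 'I_t * 'I_N) noise p w.
Proof.
move=> N_gt0 t_gt0.
have Nt_neq0 : (N * t)%:R != 0 :> R by rewrite pnatr_eq0 -lt0n muln_gt0 N_gt0.
rewrite /Xbar exchange_big big_add1 big_mkord /=.
rewrite -(pair_big xpredT xpredT (fun k i => noise (k, i) w)) /=.
under [X in _ = _ * X]eq_bigr do rewrite sumrB sumr_const card_ord.
by rewrite sumrB sumr_const card_ord -mulrnA mulrBr -[theta *+ _]mulr_natl mulKf.
Qed.

Lemma E_Xbar_sqr_norm t : (0 < N)%N -> (0 < t)%N ->
  E (fun w => \sum_(i < N) (Xbar X t w - theta) ^+ 2) = sigma2 / t%:R.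
Proof.
move=> N_gt0 t_gt0; pose c (p : 'I_t * 'I_N) := (N * t)%:R^-1 : R.
rewrite (E_eqfun E (g := fun w => N%:R * (\sum_p c p * noise p w) ^+ 2)); last first.
  by move=> w; rewrite sumr_const card_ord mulr_natl Xbar_centered // mulr_sumr.
rewrite (E_scale HE _ (L1_sqr_noise_comb c)) E_sqr_noise_comb.
rewrite /c sumr_const card_prod !card_ord -mulr_natr !natrM.
by field; rewrite !pnatr_eq0 -!lt0n N_gt0 t_gt0.
Qed.

Section EstimatorError.
Variable A : 'M[R]_N.
Hypothesis A1 : forall i, \sum_j A i j = 1.

Lemma theta_hat_noise t i w : (0 < t)%N ->
  theta_hat A X t i w - theta
  = \sum_(p : 'I_t * 'I_N) (t%:R^-1 * (A ^+ (t.-1 - p.1)) i p.2) * noise p w.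
Proof.
move=> t_gt0; have t_neq0 : t%:R != 0 :> R by rewrite pnatr_eq0 -lt0n.
rewrite -[LHS](mulKf t_neq0) theta_hat_centered // mulr_sumr.
rewrite -(pair_big xpredT xpredT
  (fun (k : 'I_t) (j : 'I_N) => t%:R^-1 * (A ^+ (t.-1 - k)) i j * noise (k, j) w)) /=.
apply: eq_bigr => k _; rewrite mxE mulr_sumr; apply: eq_bigr => j _.
by rewrite !mxE mulrA.
Qed.

Lemma E_theta_hat_sqr_norm t : (0 < t)%N ->
  E (fun w => \sum_(i < N) (theta_hat A X t i w - theta) ^+ 2)
  = sigma2 / t%:R ^+ 2 * \sum_(m < t) sqr_frobenius (A ^+ m).
Proof.
move=> t_gt0; pose c i (p : 'I_t * 'I_N) := t%:R^-1 * (A ^+ (t.-1 - p.1)) i p.2.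
rewrite (E_eqfun E (g := fun w => \sum_i (\sum_p c i p * noise p w) ^+ 2)); last first.
  by move=> w; apply: eq_bigr => i _; rewrite theta_hat_noise.
rewrite (E_sum HE) => [|i _]; last exact: L1_sqr_noise_comb.
under eq_bigr do rewrite E_sqr_noise_comb.
rewrite -mulr_sumr -mulrA; congr (_ * _).
under eq_bigr do rewrite -(pair_big xpredT xpredT (fun k j => c _ (k, j) ^+ 2)) /=.
rewrite exchange_big mulr_sumr [in RHS](reindex_inj rev_ord_inj) /=.
apply: eq_bigr => k _; rewrite subnS predn_sub /sqr_frobenius mulr_sumr; apply: eq_bigr => i _.
by rewrite mulr_sumr; apply: eq_bigr => j _; rewrite /c exprMn exprVn.
Qed.

End EstimatorError.

Lemma tau_sqr_frobenius (A : 'M[R]_N) t :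
  stochastic A -> sigma2 != 0 -> (0 < N)%N -> (0 < t)%N ->
  tau E A X theta t = t%:R / \sum_(m < t) sqr_frobenius (A ^+ m).
Proof.
move=> HA s_neq0 N_gt0 t_gt0.
have D_gt0 : 0 < \sum_(m < t) sqr_frobenius (A ^+ m).
  by apply: lt_le_trans (sum_sqr_frobenius_pow_ge t N_gt0 HA); rewrite ltr0n.
rewrite /tau E_Xbar_sqr_norm // E_theta_hat_sqr_norm //; last exact: HA.2.
by field; rewrite gt_eqF // s_neq0 pnatr_eq0 -lt0n t_gt0.
Qed.

End SampleModel.

Theorem proposition1 (R : realFieldType) (N : nat) (HN : (2 <= N)%N)
    (Om : Type) (L1 L2 : (Om -> R) -> Prop) (E : (Om -> R) -> R)
    (HE : expectation_space L1 L2 E)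
    (X : 'I_N -> nat -> Om -> R) (theta sigma2 : R) (Hsigma : 0 < sigma2)
    (HX : sample_model L1 L2 E X theta sigma2)
    (A : 'M[R]_N) (HA : stochastic A) :
  (forall t : nat, (1 <= t)%N ->
     N%:R^-1 <= tau E A X theta t /\ tau E A X theta t <= 1) /\
  (~ irreducible A ->
     forall t : nat, (1 <= t)%N -> tau E A X theta t <= 1 - (N.+1)%:R^-1).
Proof.
have N_gt0 : (0 < N)%N by exact: leq_trans HN.
have N_pos : 0 < N%:R :> R by rewrite ltr0n.
have tau_eq := tau_sqr_frobenius HE HX HA (lt0r_neq0 Hsigma) N_gt0.
pose D t := \sum_(m < t) sqr_frobenius (A ^+ m).
have D_ge t : t%:R <= D t := sum_sqr_frobenius_pow_ge t N_gt0 HA.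
have D_le t : D t <= t%:R * N%:R.
  by apply: sum_ord_le_const => m; exact: sqr_frobenius_stochastic_le (stochastic_pow m HA).
split=> [t t_gt0|Airr t t_gt0]; have t_pos : 0 < t%:R :> R by rewrite ltr0n.
  have D_pos := lt_le_trans t_pos (D_ge t).
  rewrite tau_eq // ler_pdivlMr // ler_pdivrMr // mul1r D_ge; split=> //.
  by rewrite mulrC ler_pdivrMr // D_le.
have D_red : t%:R * (1 + N%:R^-1) <= D t.
  by apply: sum_ord_ge_const => m; exact: sqr_frobenius_reducible_ge.
have D_pos : 0 < D t.
  by apply: lt_le_trans D_red; rewrite mulr_gt0 // ltr_wpDr // invr_ge0 ler0n.
have tau_red : (1 - N.+1%:R^-1) * (t%:R * (1 + N%:R^-1)) = t%:R :> R.
  by rewrite -natr1; field; rewrite natr1 !pnatr_eq0 -lt0n N_gt0.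
rewrite tau_eq // ler_pdivrMr // -[leLHS]tau_red ler_wpM2l //.
by rewrite subr_ge0 invf_le1 ?ler1n ?ltr0n.
Qed.
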